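(* Let $k\ge 3$, let $G_1,\ldots,G_k$ be a finite sequence of pairwise disjoint connected graphs and let $x_i\in V(G_i)$. Let $G$ be the circuit of the graphs $\{G_i\}_{i=1}^k$ with respect to the vertices $\{x_i\}_{i=1}^k$. Then $$SO(G)\geq 2k\sqrt{2}+\sum_{i=1}^{k}SO(G_i),$$ and equality holds if and only if $G_i=K_1$ for every $1\le i\le k$.
   Context: All graphs are finite and simple. For a graph $H$, $SO(H)=\sum_{uv\in E(H)}\sqrt{d_u^2+d_v^2}$, where $d_u$ is the degree of $u$ in $H$ (the Sombor index). The circuit of $G_1,\ldots,G_k$ with respect to $x_1,\ldots,x_k$ is the graph obtained from the disjoint union of $G_1,\ldots,G_k$ and a cycle $C_k$ with vertices $c_1,\ldots,c_k$ in cyclic order, by identifying $x_i$ with $c_i$ for each $i$. *)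

From mathcomp Require Import all_boot all_order all_algebra.
Set Implicit Arguments. Unset Strict Implicit. Unset Printing Implicit Defensive.
Import Order.TTheory GRing.Theory Num.Theory.
Local Open Scope ring_scope.

(* A simple graph on a finite type T is a symmetric irreflexive relation e. *)

Definition deg (T : finType) (e : rel T) (u : T) : nat := #|[set v | e u v]|.

(* Sombor index: sum over edges uv of sqrt(d_u^2 + d_v^2).  Each (undirected)
   edge is counted twice in the sum over ordered adjacent pairs, hence 1/2. *)
Definition SO (R : rcfType) (T : finType) (e : rel T) : R :=
  2^-1 * \sum_(u : T) \sum_(v : T | e u v)
     Num.sqrt ((deg e u)%:R ^+ 2 + (deg e v)%:R ^+ 2).

Definition cyc_adj (k : nat) (i j : 'I_k) : bool :=
  ((val j == (val i).+1 %% k) || (val i == (val j).+1 %% k))%N.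

(* The circuit of G_1..G_k (vertex types T i, edge relations e i) w.r.t. x_i:
   vertex set is the disjoint union {i : 'I_k & T i}; edges are the edges of
   each G_i, plus the cycle edges x_i x_j for i, j adjacent in C_k
   (c_i identified with x_i). *)
Definition circuit_rel (k : nat) (T : 'I_k -> finType)
    (e : forall i, rel (T i)) (x : forall i, T i) : rel {i : 'I_k & T i} :=
  fun u v =>
    ((tag u == tag v) && e (tag u) (tagged u) (tagged_as u v))
    || [&& tagged u == x (tag u), tagged v == x (tag v) & cyc_adj (tag u) (tag v)].

From mathcomp Require Import all_boot all_order all_algebra.
From mathcomp Require Import zify ring lra.
Import Order.TTheory GRing.Theory Num.Theory.
Local Open Scope ring_scope.

(* The edges of the circuit are the edges of the G_i together with the k cycle
   edges x_i x_(i+1), and passing from G_i to the circuit raises the degree of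
   x_i by 2 and leaves the other degrees unchanged.  The Sombor weight
   sqrt (d_u^2 + d_v^2) is increasing in both degrees, so every edge of G_i
   weighs at least as much as it did in G_i, and every cycle edge, whose ends
   have degree at least 2, weighs at least sqrt 8 = 2 sqrt 2, with equality iff
   both ends are isolated in their own G_j.  As G_i is connected, x_i is
   isolated in G_i iff G_i = K_1; and if every G_i is K_1 the circuit is the
   cycle C_k, for which equality holds. *)

Definition sombor (R : rcfType) (m n : nat) : R := Num.sqrt (m%:R ^+ 2 + n%:R ^+ 2).

Lemma SOE (R : rcfType) (T : finType) (e : rel T) :
  SO R e = 2^-1 * \sum_u \sum_(v | e u v) sombor R (deg e u) (deg e v).
Proof. by []. Qed.

Lemma sombor_leif {R : rcfType} (m n p q : nat) :
  sombor R m n <= sombor R (m + p) (n + q) ?= iff (p == 0%N) && (q == 0%N).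
Proof.
rewrite /sombor (mono_in_leif (@ler_psqrt R)) ?nnegrE ?addr_ge0 ?sqr_ge0 //.
rewrite -!natrX -!natrD leif_nat_r; apply: leqif_add; apply/leqifP.
  by case: p => [|p]; rewrite ?addn0 ?eqxx // ltn_sqr addnS ltnS leq_addr.
by case: q => [|q]; rewrite ?addn0 ?eqxx // ltn_sqr addnS ltnS leq_addr.
Qed.

Lemma sombor22 (R : rcfType) : sombor R 2%N 2%N = 2 * Num.sqrt 2.
Proof.
rewrite /sombor (_ : 2%:R ^+ 2 + 2%:R ^+ 2 = 2 ^+ 2 * 2 :> R).
  by rewrite sqrtrM ?sqr_ge0 // sqrtr_sqr ger0_norm.
by rewrite -mulr2n mulr_natr.
Qed.

Lemma val_ordS {n} (i : 'I_n.+1) : ordS i = (if i == n :> nat then 0 else i.+1)%N :> nat.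
Proof.
have := ltn_ord i; rewrite /=; case: eqP => [-> _|ne lt_i]; first exact: modnn.
by apply: modn_small; lia.
Qed.

Lemma ordS_neq {n} (i : 'I_n.+1) : (0 < n)%N -> ordS i != i.
Proof.
move=> n_gt0; apply/eqP => /(congr1 (@nat_of_ord _)).
by rewrite val_ordS; case: ifP => /eqP; lia.
Qed.

Lemma ordS2_neq {n} (i : 'I_n.+1) : (1 < n)%N -> ordS (ordS i) != i.
Proof.
move=> n_gt1; apply/eqP => /(congr1 (@nat_of_ord _)); have := ltn_ord i.
by rewrite val_ordS; case: ifP => /eqP; rewrite val_ordS; case: ifP => /eqP; lia.
Qed.

Lemma cyc_adjE {n} (i j : 'I_n.+1) : cyc_adj i j = (j == ordS i) || (j == ord_pred i).
Proof.
by rewrite -(can2_eq (@ordSK _) (@ord_predK _)) -!val_eqE /= [(_ %% _ == _)%N]eq_sym.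
Qed.

Lemma cyc_adj_irr {k} (i : 'I_k) : (1 < k)%N -> cyc_adj i i = false.
Proof.
case: k i => [[]//|n] i n_gt0; have /negbTE ordS_i := ordS_neq i n_gt0.
by rewrite cyc_adjE (eq_sym i) ordS_i -(can2_eq (@ordSK _) (@ord_predK _)) ordS_i.
Qed.

Lemma card_cyc_adj {k} (i : 'I_k) : (2 < k)%N -> #|[set j | cyc_adj i j]| = 2%N.
Proof.
case: k i => [[]//|n] i n_gt1.
have -> : [set j | cyc_adj i j] = [set ordS i; ord_pred i].
  by apply/setP => j; rewrite !inE cyc_adjE.
by rewrite cards2 -(can2_eq (@ordSK _) (@ord_predK _)) ordS2_neq.
Qed.

Lemma sum_cyc_adj_const (V : nmodType) {k} (i : 'I_k) (c : V) :
  (2 < k)%N -> \sum_(j | cyc_adj i j) c = c *+ 2.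
Proof.
move=> k_gt2; rewrite -(card_cyc_adj i k_gt2) -sumr_const.
by apply: eq_bigl => j; rewrite inE.
Qed.

Lemma cyc_adj_exists {k} (i : 'I_k) : (2 < k)%N -> exists j, cyc_adj i j.
Proof.
move=> k_gt2; have /card_gt0P [j] : (0 < #|[set j | cyc_adj i j]|)%N.
  by rewrite card_cyc_adj.
by rewrite inE; exists j.
Qed.

Lemma card1_no_edge (T : finType) (e : rel T) :
  irreflexive e -> #|T| = 1%N -> forall a b, e a b = false.
Proof.
move=> e_irr /eqP; rewrite eqn_leq => /andP [/fintype_le1P all_eq _] a b.
by rewrite (all_eq a b).
Qed.

Lemma connected_deg0 {T : finType} {e : rel T} (z : T) :
  irreflexive e -> (forall a b, connect e a b) -> (deg e z == 0%N) = (#|T| == 1%N).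
Proof.
move=> e_irr e_conn; rewrite /deg cards_eq0; apply/eqP/eqP => [no_nbr | T1].
  apply: (eq_card1 (x := z)) => b; rewrite !inE.
  have /connectP [[/= _ -> | c p /= /andP [e_zc _] _]] := e_conn z b; first by rewrite eqxx.
  by have := in_set0 c; rewrite -no_nbr inE e_zc.
by apply/setP => v; rewrite !inE card1_no_edge.
Qed.

Lemma sum_sigT (V : nmodType) (I : finType) (T : I -> finType) (F : {i : I & T i} -> V) :
  \sum_u F u = \sum_i \sum_(a : T i) F (Tagged T a).
Proof.
rewrite (sig_big_dep (fun=> true) (fun _ _ => true) (fun i a => F (Tagged T a))) /=.
by apply: eq_bigr => -[i a].
Qed.

Section Circuit.

Context {k : nat} {T : 'I_k -> finType} (e : forall i, rel (T i)) (x : forall i, T i).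
Hypothesis k_gt2 : (2 < k)%N.

Local Notation G := (circuit_rel e x).
Local Notation hub i := (Tagged T (x i)).

Lemma sum_circuit_nbrs (V : nmodType) i (a : T i) (F : {i : 'I_k & T i} -> V) :
  \sum_(v | G (Tagged T a) v) F v =
  \sum_(b | e i a b) F (Tagged T b)
  + (if a == x i then \sum_(j | cyc_adj i j) F (hub j) else 0).
Proof.
have cyc_irr := cyc_adj_irr i (ltnW k_gt2).
have other_tag j (b : T j) :
    j != i -> G (Tagged T a) (Tagged T b) = [&& b == x j, a == x i & cyc_adj i j].
  by move=> ji; rewrite /circuit_rel /= eq_sym (negbTE ji) andbCA.
rewrite big_mkcond sum_sigT (bigD1 i) //=; congr (_ + _).
  rewrite [RHS]big_mkcond; apply: eq_bigr => b _.
  by rewrite /circuit_rel /= eqxx tagged_asE cyc_irr !andbF orbF.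
under eq_bigr => j ji do under eq_bigr => b _ do rewrite other_tag //.
under eq_bigr => j _ do rewrite -big_mkcond big_mkcondr big_pred1_eq.
case: (a == x i) => /=; last by rewrite big1.
by rewrite [RHS]big_mkcond [RHS](bigD1 i) //= cyc_irr add0r.
Qed.

Lemma deg_circuit i (a : T i) : deg G (Tagged T a) = (deg (e i) a + 2 * (a == x i))%N.
Proof.
rewrite /deg -!sum1dep_card (sum_circuit_nbrs nat) sum_cyc_adj_const //.
by case: (a == x i).
Qed.

Lemma sum_circuit_edges (V : nmodType) (F : {i : 'I_k & T i} -> {i : 'I_k & T i} -> V) :
  \sum_u \sum_(v | G u v) F u v =
  \sum_i \sum_(a : T i) \sum_(b | e i a b) F (Tagged T a) (Tagged T b)
  + \sum_i \sum_(j | cyc_adj i j) F (hub i) (hub j).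
Proof.
rewrite sum_sigT -big_split; apply: eq_bigr => i _.
under eq_bigr => a _ do rewrite sum_circuit_nbrs.
by rewrite big_split /= -big_mkcond big_pred1_eq.
Qed.

(* Like [SO], these sum over ordered pairs, so each edge is counted twice. *)
Definition inner_edge_sum (R : rcfType) : R :=
  \sum_i \sum_(a : T i) \sum_(b | e i a b)
    sombor R (deg G (Tagged T a)) (deg G (Tagged T b)).

Definition cycle_edge_sum (R : rcfType) : R :=
  \sum_i \sum_(j | cyc_adj i j) sombor R (deg G (hub i)) (deg G (hub j)).

Lemma SO_circuitE (R : rcfType) :
  SO R G = 2^-1 * (inner_edge_sum R + cycle_edge_sum R).
Proof. by rewrite SOE sum_circuit_edges. Qed.

Lemma sum_SO_le_inner (R : rcfType) : \sum_i SO R (e i) <= 2^-1 * inner_edge_sum R.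
Proof.
rewrite mulr_sumr; apply: ler_sum => i _; rewrite SOE ler_pM2l ?invr_gt0 //.
do 2 (apply: ler_sum => ? _); rewrite !deg_circuit; exact: sombor_leif.
Qed.

Lemma cycle_edge_sum_leif (R : rcfType) :
  (2 * k%:R * Num.sqrt 2) *+ 2 <= cycle_edge_sum R
    ?= iff [forall i, deg (e i) (x i) == 0%N].
Proof.
have -> : (2 * k%:R * Num.sqrt 2) *+ 2 = \sum_(i < k) \sum_(j | cyc_adj i j) sombor R 2%N 2%N.
  rewrite (eq_bigr (fun=> sombor R 2%N 2%N *+ 2)) => [|i _]; last exact: sum_cyc_adj_const.
  by rewrite sumr_const card_ord sombor22; ring.
rewrite (_ : [forall i, _] = [forall i, [forall (j | cyc_adj i j),
               (deg (e i) (x i) == 0%N) && (deg (e j) (x j) == 0%N)]]).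
  apply: leif_sum => i _; apply: leif_sum => j _.
  by rewrite !deg_circuit !eqxx ![(deg _ _ + _)%N]addnC; exact: sombor_leif.
apply/forallP/forallP => isolated i; first by apply/forall_inP => j _; rewrite !isolated.
have [j adj_ij] := cyc_adj_exists i k_gt2.
by have /forall_inP/(_ j adj_ij)/andP[] := isolated i.
Qed.

End Circuit.

Theorem mainTheorem4 (R : rcfType) (k : nat) (T : 'I_k -> finType)
    (e : forall i, rel (T i)) (x : forall i, T i) :
  (3 <= k)%N ->
  (forall i, symmetric (e i)) ->
  (forall i, irreflexive (e i)) ->
  (forall i (a b : T i), connect (e i) a b) ->
  (2 * k%:R * Num.sqrt 2 + \sum_(i < k) SO R (e i) <= SO R (circuit_rel e x))
  /\ (SO R (circuit_rel e x) = 2 * k%:R * Num.sqrt 2 + \sum_(i < k) SO R (e i)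
      <-> (forall i, #|T i| = 1%N)).
Proof.
move=> k_gt2 _ e_irr e_conn.
have SO_G := SO_circuitE e x k_gt2 R.
have inner_le := sum_SO_le_inner e x k_gt2 R.
have [cycle_le cycle_eq] := cycle_edge_sum_leif e x k_gt2 R.
have hubs_isolated : [forall i, deg (e i) (x i) == 0%N] <-> forall i, #|T i| = 1%N.
  have hub_isolated i := connected_deg0 (x i) (e_irr i) (e_conn i).
  split => [/forallP isolated i | T1]; first by apply/eqP; rewrite -hub_isolated.
  by apply/forallP => i; rewrite hub_isolated T1.
split; first by rewrite SO_G; lra.
split => [SO_eq | T1]; first by apply/hubs_isolated; rewrite -cycle_eq; apply/eqP; lra.
have cycle_min := eqTleif (cycle_le, cycle_eq) (hubs_isolated.2 T1).
have edge_sum0 i (F : T i -> T i -> R) : \sum_a \sum_(b | e i a b) F a b = 0.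
  by apply: big1 => a _; rewrite big_pred0 // => b; rewrite card1_no_edge.
have inner0 : inner_edge_sum e x R = 0 by apply: big1 => i _; exact: edge_sum0.
have parts0 : \sum_i SO R (e i) = 0 by apply: big1 => i _; rewrite SOE edge_sum0 mulr0.
by rewrite SO_G inner0 parts0 -cycle_min; lra.
Qed.
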